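(* Let $\mathcal H^{gen}$ be a set of measurable functions $G\colon[0,1]^d\to\mathbb R^d$ such that $G_{\#}\lambda$ is absolutely continuous with respect to Lebesgue measure for each $G\in\mathcal H^{gen}$, and let $\mathcal H^{dis}$ be a set of measurable functions $D\colon\mathbb R^d\to[0,1]$. Let $\hat G_n=\hat G_n(\omega)\in\mathcal H^{gen}$, $n\in\mathbb N$, $\omega\in\Omega$, be a random sequence of generators. Let $$\Delta_G=\inf_{G\in\mathcal H^{gen}}d_{JS}(\mu^*,G_{\#}\lambda),\qquad \Delta_D=\sup_{G\in\mathcal H^{gen}}\Big\{L(G,D_G)-\sup_{D\in\mathcal H^{dis}}L(G,D)\Big\},$$ $$\Delta_S(n)=\sup_{G\in\mathcal H^{gen},D\in\mathcal H^{dis}}|L(G,D)-\hat L_n(G,D)|,\qquad \Delta_T(n)=\sup_{D\in\mathcal H^{dis}}\hat L_n(\hat G_n,D)-\inf_{G\in\mathcal H^{gen}}\sup_{D\in\mathcal H^{dis}}\hat L_n(G,D).$$ Then for all $n\in\mathbb N$, almost surely, $$d_{JS}(\mu^*,(\hat G_n)_{\#}\lambda)\le\Delta_T(n)+\Delta_D+2\Delta_S(n)+\Delta_G.$$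
   Context: Let $d\in\mathbb N$. $\lambda$ is the restriction of $d$-dimensional Lebesgue measure to $[0,1]^d$; $G_{\#}\lambda$ is the pushforward of $\lambda$ under $G$. $\mu^*$ is a probability measure on $[0,1]^d$ with Lebesgue density $p^*$ satisfying $p^*(x)>0$ for $x\in[0,1]^d$ and $p^*(x)=0$ for $x\notin[0,1]^d$. On a probability space $(\Omega,\mathcal F,\mathbb P)$, $Y,Y_1,Y_2,\dots$ are i.i.d. $[0,1]^d$-valued random variables with law $\mu^*$ and $Z,Z_1,Z_2,\dots$ are i.i.d. $[0,1]^d$-valued random variables with law $\lambda$. For measurable $G\colon[0,1]^d\to\mathbb R^d$ and $D\colon\mathbb R^d\to[0,1]$, $L(G,D)=\frac12\mathbb E[\log D(Y)+\log(1-D(G(Z)))]$ and $\hat L_n(G,D)=\frac1{2n}\sum_{i=1}^n\log D(Y_i)+\frac1{2n}\sum_{i=1}^n\log(1-D(G(Z_i)))$ (both may take the value $-\infty$). For $G$ with $G_{\#}\lambda$ having Lebesgue density $p$, $D_G\colon\mathbb R^d\to[0,1]$ is defined by $D_G(x)=\frac{p^*(x)}{p^*(x)+p(x)}$ for $x\in[0,1]^d$ and $D_G(x)=0$ for $x\notin[0,1]^d$. The Kullback–Leibler divergence is $d_{KL}(\nu\Vert\mu)=\int\log(\frac{d\nu}{d\mu})d\nu$ and the Jensen–Shannon divergence is $d_{JS}(\nu,\mu)=\frac12\big(d_{KL}(\nu\Vert\frac{\mu+\nu}2)+d_{KL}(\mu\Vert\frac{\mu+\nu}2)\big)$. *)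

From HB Require Import structures.
From mathcomp Require Import all_boot all_order all_algebra.
From mathcomp Require Import all_classical all_reals all_analysis.
From mathcomp Require Import ereal lebesgue_measure measurable_realfun.

Set Implicit Arguments.
Unset Strict Implicit.
Unset Printing Implicit Defensive.

Import Order.TTheory GRing.Theory Num.Theory.
Import numFieldNormedType.Exports.

Local Open Scope classical_set_scope.
Local Open Scope ring_scope.

(* R^d as a measurable space: row vectors 'rV[R]_d with the product   *)
(* (= Borel) sigma-algebra generated by the coordinate projections.    *)

Definition coord_gen (R : realType) (d : nat) : set (set 'rV[R]_d) :=
  [set A | exists (i : 'I_d) (B : set R),
      measurable B /\ A = (fun x : 'rV[R]_d => x ord0 i) @^-1` B].

Definition Rd (R : realType) (d : nat) := g_sigma_algebraType (@coord_gen R d).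

Definition cube (R : realType) (d : nat) : set (Rd R d) :=
  [set x | forall i : 'I_d, 0 <= x ord0 i <= 1].
Arguments cube R d : clear implicits.

(* [leb] is d-dimensional Lebesgue measure: the measure on the Borel sets of
   R^d giving each half-open box its volume (this characterizes it uniquely). *)
Definition is_lebesgue_measure (R : realType) (d : nat)
  (leb : set (Rd R d) -> \bar R) : Prop :=
  forall a b : 'rV[R]_d, (forall i, a ord0 i <= b ord0 i) ->
    leb [set x : Rd R d | forall i, a ord0 i < x ord0 i <= b ord0 i]
      = (\prod_(i < d) (b ord0 i - a ord0 i))%:E.

Definition restr_cube (R : realType) (d : nat) (leb : set (Rd R d) -> \bar R)
  : set (Rd R d) -> \bar R := fun A => leb (A `&` cube R d).

Local Open Scope ereal_scope.

(* extended logarithm: log 0 = -oo *)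
Definition elog (R : realType) (r : R) : \bar R := lne r%:E.

(* "upper" (dual) extended addition / subtraction: +oo + -oo = +oo *)
Definition uadd (R : realType) (x y : \bar R) : \bar R := dual_adde x y.
Definition usub (R : realType) (x y : \bar R) : \bar R := dual_adde x (- y).

Section divergences.
Context (dT : measure_display) (T : measurableType dT) (R : realType).

Definition is_RN_derivative (nu mu : set T -> \bar R) (f : T -> \bar R) : Prop :=
  [/\ measurable_fun setT f, (forall x, 0 <= f x) &
      forall A, measurable A -> nu A = \int[mu]_(x in A) f x].

Definition dKL (nu mu : set T -> \bar R) : \bar R :=
  match pselect (exists f, is_RN_derivative nu mu f) with
  | left ex => \int[nu]_x lne (proj1_sig (cid ex) x)
  | right _ => +oo
  end.

Definition mixture (mu nu : set T -> \bar R) : set T -> \bar R :=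
  fun A => (2^-1)%:E * (mu A + nu A).

Definition dJS (nu mu : set T -> \bar R) : \bar R :=
  (2^-1)%:E * (dKL nu (mixture mu nu) + dKL mu (mixture mu nu)).

End divergences.

Section gan.
Context (R : realType) (d : nat) (dO : measure_display) (Omega : measurableType dO)
  (P : probability Omega R) (Y Z : nat -> Omega -> Rd R d).

(* Y = Y 0, Y_i = Y i (i >= 1); likewise for Z *)
Definition Lpop (G : Rd R d -> Rd R d) (D : Rd R d -> R) : \bar R :=
  (2^-1)%:E * (\int[P]_w elog (D (Y 0 w)) + \int[P]_w elog (1 - D (G (Z 0 w)))).

Definition Lemp (n : nat) (w : Omega) (G : Rd R d -> Rd R d) (D : Rd R d -> R)
  : \bar R :=
  ((2 * n)%:R^-1)%:E * (\sum_(1 <= i < n.+1) elog (D (Y i w)))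
  + ((2 * n)%:R^-1)%:E * (\sum_(1 <= i < n.+1) elog (1 - D (G (Z i w)))).

End gan.

Definition DG (R : realType) (d : nat) (pstar p : Rd R d -> R) : Rd R d -> R :=
  fun x => if `[< cube R d x >] then (pstar x / (pstar x + p x))%R else 0%R.

Definition mutually_independent (R : realType) (d : nat) (dO : measure_display)
  (Omega : measurableType dO) (P : probability Omega R) (X : nat -> Omega -> Rd R d)
  : Prop :=
  forall (s : seq nat) (B : nat -> set (Rd R d)), uniq s ->
    (forall i, i \in s -> measurable (B i)) ->
    P (\big[setI/setT]_(i <- s) (X i @^-1` B i))
      = \prod_(i <- s) P (X i @^-1` B i).

Definition iid_law (R : realType) (d : nat) (dO : measure_display)
  (Omega : measurableType dO) (P : probability Omega R) (X : nat -> Omega -> Rd R d)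
  (mu : set (Rd R d) -> \bar R) : Prop :=
  [/\ forall i, measurable_fun setT (X i),
      forall i w, cube R d (X i w),
      forall i A, measurable A -> P (X i @^-1` A) = mu A &
      mutually_independent P X].

From HB Require Import structures.
From mathcomp Require Import all_boot all_order all_algebra.
From mathcomp Require Import all_classical all_reals all_analysis.
From mathcomp Require Import ereal lebesgue_measure measurable_realfun.
From mathcomp Require Import ring lra.

Set Implicit Arguments.
Unset Strict Implicit.
Unset Printing Implicit Defensive.

Import Order.TTheory GRing.Theory Num.Theory.
Import numFieldNormedType.Exports.

Local Open Scope classical_set_scope.
Local Open Scope ring_scope.

(* For a generator G whose image measure has density p, the change of variables
   formula writes the population objective as an integral of a binary
   cross-entropy,
     L(G, D) = -1/2 \int (- p* log D - p log (1 - D)).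
   The two-point Gibbs inequality
     u log t + v log (1 - t) <= u log (u / (u + v)) + v log (v / (u + v))
   shows that D_G = p* / (p* + p) maximises L(G, .), and computing both
   Kullback-Leibler divergences against the mixture density (p* + p) / 2 gives
     d_JS(mu*, G#lambda) = L(G, D_G) + log 2.
   The bound is then the telescoping chain
     L(G^, D_G^) <= Delta_D + sup_D L(G^, D)
                 <= Delta_D + Delta_S + sup_D L^_n(G^, D)
                 <= Delta_D + Delta_S + Delta_T + inf_G sup_D L^_n(G, D)
                 <= Delta_D + 2 Delta_S + Delta_T + inf_G L(G, D_G),
   which holds for every sample, in the extended reals with the convention
   +oo - oo = +oo. *)

(** * Logarithms and binary cross-entropy *)

Section measurable_real_functions.
Context (R : realType).

Lemma measurable_inv : measurable_fun [set: R] GRing.inv.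
Proof.
(* Also valid at [t = 0], since [0^-1 = 0] and [ln 0 = 0]. *)
have -> : GRing.inv = (fun t : R => t * expR (- ln (t ^+ 2))).
  apply/funext => t; have [->|t0] := eqVneq t 0; first by rewrite invr0 mul0r.
  rewrite expRN lnK; last by rewrite posrE exprn_even_gt0 ?t0 ?orbT.
  by rewrite expr2 invfM mulrA divff // mul1r.
apply: (@measurable_funM _ _ _ _ id) => //; apply: measurableT_comp => //.
by apply: measurableT_comp => //; apply: measurableT_comp => //; exact: measurable_ln.
Qed.

Lemma measurable_elog : measurable_fun [set: R] (@elog R).
Proof.
rewrite (_ : @elog R = fun r => if r <= 0 then -oo%E else (ln r)%:E) //.
apply: measurable_fun_ifT => //; first exact: measurable_fun_ler.
by apply/measurable_EFinP; exact: measurable_ln.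
Qed.

Lemma measurable_lne : measurable_fun [set: \bar R] (@lne R).
Proof.
rewrite (_ : @lne R = fun x => if x \is a fin_num then elog (fine x) else x);
  last by apply/funext => -[].
apply: measurable_fun_ifT => //.
- by apply: (measurable_fun_bool true); exact/emeasurable_fin_num.
- exact: measurableT_comp measurable_elog _.
Qed.

End measurable_real_functions.

Section ln_inequalities.
Context (R : realType).
Implicit Types u v t : R.

Lemma mul_ln_div_le u v : 0 < u -> 0 < v -> u * ln (v / u) <= v - u.
Proof.
move=> u0 v0; have vu0 : 0 < v / u by rewrite divr_gt0.
have := @le_ln1Dx R (v / u - 1) ltac:(by rewrite ltrBrDl subrr).
rewrite addrC subrK => /(ler_wpM2l (ltW u0)).
by rewrite mulrBr mulrCA divff ?gt_eqF // mulr1 mulr1.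
Qed.

Lemma gibbs_binary u v t : 0 < u -> 0 < v -> 0 < t < 1 ->
  u * ln t + v * ln (1 - t) <= u * ln (u / (u + v)) + v * ln (v / (u + v)).
Proof.
move=> u0 v0 /andP[t0 t1]; have uv0 : 0 < u + v by rewrite addr_gt0.
have t1' : 0 < 1 - t by rewrite subr_gt0.
have lnE a b : 0 < a -> 0 < b -> ln (b * (u + v) / a) = ln b - ln (a / (u + v)).
  by move=> a0 b0; rewrite -ln_div ?posrE ?divr_gt0 // invf_div mulrA.
have := mul_ln_div_le u0 (mulr_gt0 t0 uv0); rewrite lnE //.
have := mul_ln_div_le v0 (mulr_gt0 t1' uv0); rewrite lnE //.
lra.
Qed.

End ln_inequalities.

Section binary_cross_entropy.
Context (R : realType).
Local Open Scope ereal_scope.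
Implicit Types u v t : R.

Lemma elogE t : (0 < t)%R -> elog t = (ln t)%:E.
Proof. exact: lne_EFin. Qed.

Lemma elog0 : elog (0 : R) = -oo.
Proof. by rewrite /elog /lne lexx. Qed.

Lemma elog1 : elog (1 : R) = 0.
Proof. by rewrite elogE // ln1. Qed.

Lemma oppe_elog_ge0 t : (t <= 1)%R -> 0 <= - elog t.
Proof. by move=> t1; rewrite oppe_ge0 /elog lne_le0 lee_fin. Qed.

Definition bin_xent u v t : \bar R := (- elog t) * u%:E + (- elog (1 - t)) * v%:E.

Lemma div_addr_itv01 u v : (0 <= u)%R -> (0 <= v)%R -> (0 <= u / (u + v) <= 1)%R.
Proof.
move=> u0 v0; have [->|uv_neq0] := eqVneq (u + v)%R 0%R.
  by rewrite invr0 mulr0 lexx ler01.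
have uv_gt0 : (0 < u + v)%R by rewrite lt_neqAle eq_sym uv_neq0 addr_ge0.
by rewrite divr_ge0 ?addr_ge0 //= ler_pdivrMr // mul1r lerDl.
Qed.

Lemma bin_xent_ge0 u v t : (0 <= u)%R -> (0 <= v)%R -> (0 <= t <= 1)%R ->
  0 <= bin_xent u v t.
Proof.
move=> u0 v0 /andP[t0 t1].
by rewrite adde_ge0 // mule_ge0 ?lee_fin // oppe_elog_ge0 // lerBlDr lerDl.
Qed.

Lemma bin_xent_opt_le u v t : (0 <= u)%R -> (0 <= v)%R -> (0 <= t <= 1)%R ->
  bin_xent u v (u / (u + v)) <= bin_xent u v t.
Proof.
move=> u0 v0 t01; have [u_eq0|u_neq0] := eqVneq u 0%R.
  rewrite [leLHS]/bin_xent u_eq0 mul0r subr0 elog1 oppe0 mul0e mule0 adde0.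
  by rewrite -u_eq0 bin_xent_ge0.
have [v_eq0|v_neq0] := eqVneq v 0%R.
  rewrite [leLHS]/bin_xent v_eq0 addr0 divff // subrr elog1 oppe0 mul0e mule0 add0e.
  by rewrite -v_eq0 bin_xent_ge0.
have u_gt0 : (0 < u)%R by rewrite lt_neqAle eq_sym u_neq0.
have v_gt0 : (0 < v)%R by rewrite lt_neqAle eq_sym v_neq0.
have uv_gt0 : (0 < u + v)%R by rewrite addr_gt0.
rewrite [leLHS]/bin_xent.
have -> : (1 - u / (u + v) = v / (u + v))%R by field; rewrite gt_eqF.
rewrite !elogE ?divr_gt0 // -!EFinN -!EFinM -EFinD.
case/andP: t01; rewrite le_eqVlt => /predU1P[<- _|t_gt0].
  by rewrite /bin_xent subr0 elog1 oppe0 mul0e adde0 elog0 /= gt0_mulye ?leey.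
rewrite le_eqVlt => /predU1P[->|t_lt1].
  by rewrite /bin_xent subrr elog1 oppe0 mul0e add0e elog0 /= gt0_mulye ?leey.
rewrite /bin_xent !elogE ?subr_gt0 // -!EFinN -!EFinM -EFinD lee_fin.
have t01' : (0 < t < 1)%R by rewrite t_gt0 t_lt1.
by have := gibbs_binary u_gt0 v_gt0 t01'; lra.
Qed.

Lemma bin_xent_opt_fst_le u v : (0 <= u)%R -> (0 <= v)%R ->
  (- elog (u / (u + v))) * u%:E <= v%:E.
Proof.
move=> u0 v0; have [->|u_neq0] := eqVneq u 0%R; first by rewrite mule0 lee_fin.
have u_gt0 : (0 < u)%R by rewrite lt_neqAle eq_sym u_neq0.
have uv_gt0 : (0 < u + v)%R by rewrite ltr_wpDr.
rewrite elogE ?divr_gt0 // -EFinN -EFinM lee_fin -lnV ?posrE ?divr_gt0 // invf_div.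
by rewrite mulrC; have := mul_ln_div_le u_gt0 uv_gt0; rewrite addrAC subrr add0r.
Qed.

Lemma bin_xent_opt_snd_le u v : (0 <= u)%R -> (0 <= v)%R ->
  (- elog (1 - u / (u + v))) * v%:E <= u%:E.
Proof.
move=> u0 v0; have [uv0|uv_neq0] := eqVneq (u + v)%R 0%R.
  by rewrite uv0 invr0 mulr0 subr0 elog1 oppe0 mul0e lee_fin.
have -> : (1 - u / (u + v) = v / (v + u))%R by rewrite addrC; field; rewrite addrC.
exact: bin_xent_opt_fst_le.
Qed.

Lemma measurable_bin_xent d (T : measurableType d) (u v t : T -> R) :
    measurable_fun setT u -> measurable_fun setT v -> measurable_fun setT t ->
  measurable_fun setT (fun x => bin_xent (u x) (v x) (t x)).
Proof.
move=> mu mv mt; apply: emeasurable_funD; apply: emeasurable_funM.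
- by apply: measurableT_comp => //; exact: measurableT_comp (@measurable_elog R) mt.
- exact/measurable_EFinP.
- apply: measurableT_comp => //; apply: measurableT_comp (@measurable_elog R) _.
  by apply: measurable_funB => //; exact: measurable_cst.
- exact/measurable_EFinP.
Qed.

End binary_cross_entropy.

(** * Error decomposition in the extended reals *)

Section dual_addition.
Context (R : realType).
Import DualAddTheory.
Local Open Scope ereal_dual_scope.
Implicit Types x y z : \bar R.

Lemma lee_dsubK x y : x <= x - y + y.
Proof.
case: x => [a||]; case: y => [b||] //=; rewrite ?leey ?leNye //.
by rewrite -dEFinB -dEFinD subrK.
Qed.

Lemma abse_dsubC x y : `|x - y| = `|y - x|.
Proof. by case: x => [a||]; case: y => [b||] //=; rewrite distrC. Qed.

Lemma lee_abs_dsubl x y : x <= `|x - y| + y.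
Proof. exact: le_trans (lee_dsubK x y) (lee_dD2r _ (lee_abs _)). Qed.

Lemma lee_abs_dsubr x y : y <= `|x - y| + x.
Proof. by rewrite abse_dsubC; exact: lee_abs_dsubl. Qed.

Lemma lee_dadde_ereal_inf (I : Type) (A : set I) (f : I -> \bar R) x c :
  (forall i, A i -> x <= c + f i) -> x <= c + ereal_inf (f @` A).
Proof.
case: c => [c| |] xcf.
- rewrite -lee_dsubl_addl //; apply: le_ereal_inf_tmp => _ [i Ai <-].
  by rewrite lee_dsubl_addl // xcf.
- by rewrite daddye leey.
- have [[i Ai fi]|] := pselect (exists2 i, A i & f i != +oo).
    by move: (xcf i Ai); rewrite daddeC daddeNy // leeNy_eq => /eqP ->; rewrite leNye.
  move=> /forall2NP finf; suff -> : ereal_inf (f @` A) = +oo by rewrite daddey leey.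
  apply/ereal_inf_pinfty => _ [i Ai <-].
  by have [//|/negP/negPn/eqP] := finf i.
Qed.

Lemma gan_error_decomposition (Gen Dis : Type) (gen : set Gen) (dis : set Dis)
    (L Lh : Gen -> Dis -> \bar R) (Lopt div : Gen -> \bar R) (k : R)
    (Gh : Gen) : gen Gh ->
  (forall G, gen G -> div G = (Lopt G + k%:E)%E) ->
  (forall G D, gen G -> dis D -> L G D <= Lopt G) ->
  div Gh <=
    (ereal_sup [set Lh Gh D | D in dis]
      - ereal_inf [set ereal_sup [set Lh G D | D in dis] | G in gen])
    + ereal_sup [set Lopt G - ereal_sup [set L G D | D in dis] | G in gen]
    + 2%:E * ereal_sup [set `|L G D - Lh G D| | G in gen & D in dis]
    + ereal_inf [set div G | G in gen].
Proof.
move=> genGh divE L_le.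
set Sh := ereal_sup [set Lh Gh D | D in dis].
set I := ereal_inf _.
set A := fun G => ereal_sup [set L G D | D in dis].
set DeltaD := ereal_sup _.
set S := ereal_sup _.
have LS G D : gen G -> dis D -> `|L G D - Lh G D| <= S.
  by move=> genG disD; apply: ereal_sup_ubound; exists G => //; exists D.
have AGh : A Gh <= S + Sh.
  apply: ge_ereal_sup => _ [D disD <-]; apply: le_trans (lee_abs_dsubl _ (Lh Gh D)) _.
  by apply: lee_dD; [exact: LS|apply: ereal_sup_ubound; exists D].
have IG G : gen G -> I <= S + Lopt G.
  move=> genG; apply: le_trans (ereal_inf_lbound _) _; first by exists G.
  apply: ge_ereal_sup => _ [D disD <-]; apply: le_trans (lee_abs_dsubr (L G D) _) _.
  by apply: lee_dD; [exact: LS|exact: L_le].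
have LoptGh : Lopt Gh <= DeltaD + A Gh.
  apply: le_trans (lee_dsubK _ (A Gh)) (lee_dD2r _ _).
  by apply: ereal_sup_ubound; exists Gh.
rewrite dmule_natl dmule2n; apply: lee_dadde_ereal_inf => G genG.
rewrite !divE // -!dual_addeE_def ?fin_num_adde_defl //.
apply: le_trans (lee_dD2r k%:E (le_trans LoptGh (lee_dD2l DeltaD (le_trans AGh
  (lee_dD2l S (le_trans (lee_dsubK Sh I) (lee_dD2l _ (IG G genG)))))))) _.
by rewrite !daddeA [leLHS](AC 7 (3*4*1*2*5*6*7)).
Qed.

End dual_addition.

(** * Measures with densities and divergences *)

(* [mq] and [q0] are unused in the body; they make the measure instance below
   inferable. *)
Definition density_measure d (T : measurableType d) (R : realType)
    (mu : {measure set T -> \bar R}) (q : T -> R)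
    (mq : measurable_fun setT q) (q0 : forall x, 0 <= q x) : set T -> \bar R :=
  fun A => (\int[mu]_(x in A) (q x)%:E)%E.

Section density_measure.
Context d (T : measurableType d) (R : realType) (mu : {measure set T -> \bar R}).
Context (q : T -> R) (mq : measurable_fun setT q) (q0 : forall x, 0 <= q x).
Local Open Scope ereal_scope.

Local Notation nu := (density_measure mu mq q0).

Let mEq : measurable_fun setT (EFin \o q). Proof. exact/measurable_EFinP. Qed.

Let nu0 : nu set0 = 0. Proof. exact: integral_set0. Qed.

Let nu_ge0 A : 0 <= nu A. Proof. by apply: integral_ge0 => x _; rewrite lee_fin. Qed.

Let nu_sigma_additive : semi_sigma_additive nu.
Proof. by apply: semi_sigma_additive_nng_induced => // x; rewrite lee_fin. Qed.

HB.instance Definition _ := isMeasure.Build _ _ _ nu nu0 nu_ge0 nu_sigma_additive.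

Lemma integral_density_indic A E : measurable A -> measurable E ->
  \int[nu]_(x in E) (\1_A x)%:E = \int[mu]_(x in E) ((\1_A x)%:E * (q x)%:E).
Proof.
move=> mA mE; rewrite integral_indic //= /density_measure setIC integral_mkcondr.
by rewrite epatch_indic; apply: eq_integral => x _; rewrite muleC.
Qed.

Import HBNNSimple.

Lemma integral_density_nnsfun (h : {nnsfun T >-> R}) E : measurable E ->
  \int[nu]_(x in E) (h x)%:E = \int[mu]_(x in E) ((h x)%:E * (q x)%:E).
Proof.
move=> mE.
under [LHS]eq_integral do rewrite fimfunE -fsumEFin//.
rewrite [LHS]ge0_integral_fsum//; last 2 first.
  - by move=> r; exact/measurable_EFinP/measurableT_comp.
  - by move=> n x _; rewrite EFinM nnfun_muleindic_ge0.
under [RHS]eq_integral.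
  move=> x xE; rewrite fimfunE -fsumEFin// ge0_mule_fsuml; last first.
    by move=> r; rewrite EFinM nnfun_muleindic_ge0.
  over.
rewrite [RHS]ge0_integral_fsum//; last 2 first.
  - move=> r; apply: emeasurable_funM; last exact: measurable_funTS.
    exact/measurable_EFinP/measurableT_comp.
  - by move=> n x _; rewrite mule_ge0 ?nnfun_muleindic_ge0 ?lee_fin.
apply: eq_fsbigr => r; rewrite inE => -[t _ <-].
rewrite integralZl_indic_nnsfun // integral_density_indic //.
rewrite -ge0_integralZl //; last 3 first.
  - apply: emeasurable_funM; last exact: measurable_funTS.
    exact/measurable_EFinP/measurable_indic/measurable_funPTI.
  - by move=> x _; rewrite mule_ge0 ?lee_fin.
  - by rewrite lee_fin.
by apply: eq_integral => x _; rewrite EFinM muleA.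
Qed.

Lemma integral_density (f : T -> \bar R) E : measurable E -> measurable_fun E f ->
    (forall x, E x -> 0 <= f x) ->
  \int[nu]_(x in E) f x = \int[mu]_(x in E) (f x * (q x)%:E).
Proof.
move=> mE mf f0; pose h := nnsfun_approx mE mf.
have h_ge0 n x : 0 <= (h n x)%:E by rewrite lee_fin.
have mh n : measurable_fun E (fun x => (h n x)%:E).
  exact/measurable_EFinP/measurable_funTS.
have nd_h x : E x -> {homo (fun n => (h n x)%:E) : m n / (m <= n)%N >-> m <= n}.
  by move=> _ m n mn; rewrite lee_fin; exact/lefP/nd_nnsfun_approx.
have hf x : E x -> (h n x)%:E @[n --> \oo] --> f x by exact: cvg_nnsfun_approx.
have limh x : E x -> limn (fun n => (h n x)%:E) = f x.
  by move=> Ex; apply: cvg_lim (hf x Ex).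
transitivity (lim (\int[nu]_(x in E) (h n x)%:E @[n --> \oo])).
  by rewrite -monotone_convergence //; apply: eq_integral => x /set_mem /limh.
under eq_fun do rewrite integral_density_nnsfun //.
rewrite -monotone_convergence //; last 3 first.
  - by move=> n; apply: emeasurable_funM => //; exact: measurable_funTS.
  - by move=> n x _; rewrite mule_ge0 ?lee_fin.
  - by move=> x Ex m n mn; rewrite lee_wpmul2r ?lee_fin //; exact: nd_h.
apply: eq_integral => x /set_mem Ex; apply: cvg_lim => //.
exact: cvgeZr (hf x Ex).
Qed.

End density_measure.

Section mixture_measure.
Context d (T : measurableType d) (R : realType) (mu nu : {measure set T -> \bar R}).
Local Open Scope ereal_scope.

Let mixture0 : mixture mu nu set0 = 0.
Proof. by rewrite /mixture !measure0 adde0 mule0. Qed.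

Let mixture_ge0 A : 0 <= mixture mu nu A.
Proof. by rewrite mule_ge0 ?adde_ge0 ?lee_fin ?invr_ge0. Qed.

Let mixture_sigma_additive : semi_sigma_additive (mixture mu nu).
Proof.
have half_ge0 : (0 <= 2^-1 :> R)%R by rewrite invr_ge0.
have -> : mixture mu nu = mscale (NngNum half_ge0) (measure_add mu nu).
  by apply/funext => A; rewrite /mixture /mscale -measure_addE.
exact: measure_semi_sigma_additive.
Qed.

HB.instance Definition _ := isMeasure.Build _ _ _ (mixture mu nu)
  mixture0 mixture_ge0 mixture_sigma_additive.

Lemma null_dominates_mixturel : mu `<< mixture mu nu.
Proof.
apply/null_content_dominatesP => A mA /eqP.
rewrite /mixture mule_eq0 eqe invr_eq0 pnatr_eq0 /= padde_eq0 //.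
by case/andP => /eqP.
Qed.

Lemma null_dominates_mixturer : nu `<< mixture mu nu.
Proof.
apply/null_content_dominatesP => A mA /eqP.
rewrite /mixture mule_eq0 eqe invr_eq0 pnatr_eq0 /= padde_eq0 //.
by case/andP => _ /eqP.
Qed.

End mixture_measure.

Section kl_divergence_density.
Context d (T : measurableType d) (R : realType) (lam : {measure set T -> \bar R}).
Local Open Scope ereal_scope.

Lemma dKL_density (nu mu : {measure set T -> \bar R}) (r q : T -> R) :
    measurable_fun setT r -> measurable_fun setT q ->
    (forall x, 0 <= r x)%R -> (forall x, 0 <= q x)%R ->
    (forall A, measurable A -> nu A = \int[lam]_(x in A) (r x)%:E) ->
    (forall A, measurable A -> mu A = \int[lam]_(x in A) (q x)%:E) ->
    (forall x, q x = 0%R -> r x = 0%R) -> nu `<< mu -> nu setT < +oo ->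
  forall g : T -> \bar R, measurable_fun setT g ->
    (forall x, (0 < r x)%R -> g x = lne (r x / q x)%:E) ->
  dKL nu mu = \int[nu]_x g x.
Proof.
move=> mr mq r0 q0 nuE muE rq0 numu nu_fin g mg gE.
(* With [r x / 0 = 0], [r / q] is a density of [nu] with respect to [mu]
   because [r] vanishes where [q] does. *)
pose f1 x := (r x / q x)%:E.
have mf1 : measurable_fun setT f1.
  apply/measurable_EFinP; apply: measurable_funM => //.
  exact: measurableT_comp (@measurable_inv R) mq.
have f1_ge0 x : 0 <= f1 x by rewrite lee_fin divr_ge0.
have f1_int A : measurable A -> \int[mu]_(x in A) f1 x = nu A.
  move=> mA; rewrite (eq_measure_integral (density_measure lam mq q0)); last first.
    by move=> B mB _; rewrite muE.
  rewrite integral_density //; last exact: measurable_funTS.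
  rewrite nuE //; apply: eq_integral => x _; rewrite -EFinM.
  by have [/rq0 ->|q_neq0] := eqVneq (q x) 0%R; rewrite ?mul0r ?divfK.
rewrite /dKL; case: pselect => [RN|[]]; last first.
  by exists f1; split => // A mA; rewrite f1_int.
case: cid => f /= [mf f_ge0 fE].
have f1f : ae_eq mu setT f1 f.
  apply: integral_ae_eq => //; last by move=> E _ mE; rewrite f1_int // fE.
  apply/integrableP; split => //.
  by under eq_integral do rewrite gee0_abs //; rewrite f1_int.
have r_gt0 : {ae nu, forall x, (0 < r x)%R}.
  have mr0 : measurable (r @^-1` `]-oo, 0%R]).
    by rewrite -[X in measurable X]setTI; exact: mr.
  exists (r @^-1` `]-oo, 0%R]); split => //.
  - rewrite nuE //; apply: integral0_eq => x /=; rewrite in_itv /= => rx0.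
    by apply/eqP; rewrite eqe eq_le rx0 r0.
  - by move=> x /= /negP; rewrite in_itv /= leNgt.
apply: ae_eq_integral => //; first exact: measurableT_comp (@measurable_lne R) mf.
apply: filterS2 (null_dominates_ae_eq measurableT numu f1f) r_gt0.
by move=> x f1fx rx _; rewrite gE // -f1fx.
Qed.

End kl_divergence_density.

Lemma ge0_integral_law_density d dO (T : measurableType d) (Omega : measurableType dO)
    (R : realType) (P : {measure set Omega -> \bar R}) (lam : {measure set T -> \bar R})
    (X : Omega -> T) (q : T -> R) (mq : measurable_fun setT q)
    (q0 : forall x, (0 <= q x)%R) :
    measurable_fun setT X ->
    (forall A, measurable A -> P (X @^-1` A) = (\int[lam]_(x in A) (q x)%:E)%E) ->
  forall h : T -> \bar R, measurable_fun setT h -> (forall x, 0 <= h x)%E ->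
  (\int[P]_w h (X w) = \int[lam]_x (h x * (q x)%:E))%E.
Proof.
move=> mX lawX h mh h0.
have := ge0_integral_pushforward mX P measurableT mh (fun y _ => h0 y).
rewrite preimage_setT => <-.
rewrite [LHS](eq_measure_integral (density_measure lam mq q0)).
  by apply: integral_density.
by move=> A mA _; rewrite /= /pushforward lawX.
Qed.

Section jensen_shannon_density.
Context d (T : measurableType d) (R : realType) (lam : {measure set T -> \bar R}).
Context (nu mu : {measure set T -> \bar R}) (r s : T -> R).
Hypotheses (mr : measurable_fun setT r) (ms : measurable_fun setT s).
Hypotheses (r0 : forall x, 0 <= r x) (s0 : forall x, 0 <= s x).
Hypothesis nuE : forall A, measurable A -> nu A = (\int[lam]_(x in A) (r x)%:E)%E.
Hypothesis muE : forall A, measurable A -> mu A = (\int[lam]_(x in A) (s x)%:E)%E.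
Hypotheses (nu1 : nu setT = 1%E) (mu1 : mu setT = 1%E).
Local Open Scope ereal_scope.

Let q x := (2^-1 * (s x + r x))%R.

Let mq : measurable_fun setT q.
Proof. by apply: measurable_funM => //; exact: measurable_funD. Qed.

Let q0 x : (0 <= q x)%R.
Proof. by rewrite mulr_ge0 ?addr_ge0 ?invr_ge0. Qed.

Let mixtureE A : measurable A -> mixture mu nu A = \int[lam]_(x in A) (q x)%:E.
Proof.
have mE f : measurable_fun setT f -> measurable_fun A (fun x => (f x)%:E).
  by move=> mf; exact/measurable_EFinP/measurable_funTS.
move=> mA; rewrite /mixture muE // nuE //.
under [RHS]eq_integral do rewrite EFinM EFinD.
rewrite ge0_integralZl_EFin ?invr_ge0 //; last 2 first.
- by move=> x _; rewrite adde_ge0 ?lee_fin.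
- by apply: emeasurable_funD; exact: mE.
by rewrite ge0_integralD // => [x _||x _|]; rewrite ?lee_fin //; exact: mE.
Qed.

Let dKL_mixture (rho : {measure set T -> \bar R}) (p : T -> R) (a : T -> \bar R) :
    measurable_fun setT p -> (forall x, 0 <= p x)%R ->
    (forall A, measurable A -> rho A = \int[lam]_(x in A) (p x)%:E) ->
    rho setT = 1 -> rho `<< mixture mu nu -> (forall x, p x <= 2 * q x)%R ->
    measurable_fun setT a -> (forall x, 0 <= a x) ->
    \int[lam]_x (a x * (p x)%:E) <= 1 ->
    (forall x, (0 < p x)%R -> lne (p x / q x)%:E = (ln 2)%:E - a x) ->
  dKL rho (mixture mu nu) = (ln 2)%:E - \int[lam]_x (a x * (p x)%:E).
Proof.
move=> mp p0 rhoE rho1 dom p_le ma a0 int_a aE.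
have rho_int_a : \int[rho]_x a x = \int[lam]_x (a x * (p x)%:E).
  rewrite (eq_measure_integral (density_measure lam mp p0)); last first.
    by move=> A mA _; rewrite rhoE.
  exact: integral_density.
rewrite (@dKL_density _ _ _ lam rho _ p q mp mq p0 q0 rhoE mixtureE _ dom _
  (fun x => (ln 2)%:E - a x)) //; last 4 first.
- by move=> x qx0; apply/le_anti; rewrite p0 andbT; have := p_le x; rewrite qx0 mulr0.
- by rewrite rho1 ltry.
- by apply: emeasurable_funB => //; exact: measurable_cst.
- by move=> x /aE.
rewrite integralB //; last 2 first.
- apply/integrableP; split; first exact: measurable_cst.
  by rewrite integral_cst // rho1 mule1 ltry.
- apply/integrableP; split => //.
  under eq_integral do rewrite gee0_abs //.
  by rewrite rho_int_a (le_lt_trans int_a) ?ltry.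
by rewrite integral_cst // rho1 mule1 rho_int_a.
Qed.

Let D x := (r x / (r x + s x))%R.
Let a x := - elog (D x).
Let b x := - elog (1 - D x).

Let D_itv01 x : (0 <= D x <= 1)%R. Proof. exact: div_addr_itv01. Qed.

Let ma : measurable_fun setT a.
Proof.
apply: measurableT_comp => //; apply: measurableT_comp (@measurable_elog R) _.
by apply: measurable_funM => //; apply: measurableT_comp (@measurable_inv R) _;
  exact: measurable_funD.
Qed.

Let mb : measurable_fun setT b.
Proof.
apply: measurableT_comp => //; apply: measurableT_comp (@measurable_elog R) _.
apply: measurable_funB => //; apply: measurable_funM => //.
by apply: measurableT_comp (@measurable_inv R) _; exact: measurable_funD.
Qed.

Let a_ge0 x : 0 <= a x.
Proof. by apply: oppe_elog_ge0; case/andP: (D_itv01 x). Qed.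

Let b_ge0 x : 0 <= b x.
Proof. by apply: oppe_elog_ge0; rewrite lerBlDr lerDl; case/andP: (D_itv01 x). Qed.

Let int_ar_le1 : \int[lam]_x (a x * (r x)%:E) <= 1.
Proof.
rewrite -mu1 muE //; apply: ge0_le_integral => //.
- by move=> x _; rewrite mule_ge0 ?lee_fin.
- by apply: emeasurable_funM => //; exact/measurable_EFinP.
- exact/measurable_EFinP.
- by move=> x _; apply: bin_xent_opt_fst_le.
Qed.

Let int_bs_le1 : \int[lam]_x (b x * (s x)%:E) <= 1.
Proof.
rewrite -nu1 nuE //; apply: ge0_le_integral => //.
- by move=> x _; rewrite mule_ge0 ?lee_fin.
- by apply: emeasurable_funM => //; exact/measurable_EFinP.
- exact/measurable_EFinP.
- by move=> x _; apply: bin_xent_opt_snd_le.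
Qed.

Let lne_div_q x c : (0 < c)%R -> (c <= r x + s x)%R ->
  lne (c / q x)%:E = (ln 2)%:E + (ln (c / (r x + s x)))%:E.
Proof.
move=> c_gt0 c_le; have rs_gt0 : (0 < r x + s x)%R by exact: lt_le_trans c_le.
rewrite lne_EFin; last by rewrite divr_gt0 // mulr_gt0 // addrC.
by rewrite -EFinD -lnM ?posrE ?divr_gt0 // /q addrC invfM invrK mulrCA mulrA.
Qed.

Let dKL_nu_mixture : dKL nu (mixture mu nu) = (ln 2)%:E - \int[lam]_x (a x * (r x)%:E).
Proof.
apply: (dKL_mixture mr r0 nuE nu1 (@null_dominates_mixturer _ _ _ mu nu)) => //.
- by move=> x; rewrite /q mulrA divff ?mul1r ?lerDr.
- move=> x rx_gt0; rewrite lne_div_q ?lerDl // /a /D elogE ?divr_gt0 ?ltr_wpDr //.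
  by rewrite oppeK.
Qed.

Let dKL_mu_mixture : dKL mu (mixture mu nu) = (ln 2)%:E - \int[lam]_x (b x * (s x)%:E).
Proof.
apply: (dKL_mixture ms s0 muE mu1 (@null_dominates_mixturel _ _ _ mu nu)) => //.
- by move=> x; rewrite /q mulrA divff ?mul1r ?lerDl.
- move=> x sx_gt0; have rs_gt0 : (0 < r x + s x)%R by rewrite ltr_wpDl.
  have DE : (1 - D x = s x / (r x + s x))%R by rewrite /D; field; rewrite gt_eqF.
  by rewrite lne_div_q ?lerDr // /b DE elogE ?divr_gt0 // oppeK.
Qed.

Lemma dJS_density :
  dJS nu mu = (ln 2)%:E
    - (2^-1)%:E * \int[lam]_x bin_xent (r x) (s x) (r x / (r x + s x)).
Proof.
have ar_ge0 x : 0 <= a x * (r x)%:E by rewrite mule_ge0 ?lee_fin.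
have bs_ge0 x : 0 <= b x * (s x)%:E by rewrite mule_ge0 ?lee_fin.
have fin_ar : \int[lam]_x (a x * (r x)%:E) \is a fin_num.
  by rewrite ge0_fin_numE ?(le_lt_trans int_ar_le1) ?ltry ?integral_ge0.
have fin_bs : \int[lam]_x (b x * (s x)%:E) \is a fin_num.
  by rewrite ge0_fin_numE ?(le_lt_trans int_bs_le1) ?ltry ?integral_ge0.
have mar : measurable_fun setT (fun x => a x * (r x)%:E).
  by apply: emeasurable_funM => //; exact/measurable_EFinP.
have mbs : measurable_fun setT (fun x => b x * (s x)%:E).
  by apply: emeasurable_funM => //; exact/measurable_EFinP.
rewrite /dJS dKL_nu_mixture dKL_mu_mixture.
rewrite [in RHS](ge0_integralD _ _ (fun x _ => ar_ge0 x) mar (fun x _ => bs_ge0 x) mbs)//.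
rewrite -(fineK fin_ar) -(fineK fin_bs) -!EFinN -!EFinD -!EFinM.
by congr EFin; field.
Qed.

End jensen_shannon_density.

(** * The GAN objective on the unit cube *)

Lemma measurable_cube (R : realType) (d : nat) : measurable (cube R d).
Proof.
rewrite (_ : cube R d = \bigcap_(i in [set: 'I_d])
    ((fun x : Rd R d => x ord0 i) @^-1` `[0%R, 1%R]%classic)).
  apply: fin_bigcap_measurable; first exact: finite_finset.
  by move=> i _; apply: sub_sigma_algebra; exists i, `[0%R, 1%R]%classic; split => //.
apply/seteqP; split => [x x01 i _|x x01 i] /=; first by rewrite in_itv /= x01.
by have := x01 i I; rewrite /= in_itv.
Qed.

Lemma measurable_preimage_cube (R : realType) (d : nat) (G : Rd R d -> Rd R d) :
  measurable_fun (cube R d) G ->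
  forall A, measurable A -> measurable (G @^-1` A `&` cube R d).
Proof. by move=> mG A mA; rewrite setIC; exact: mG (@measurable_cube R d) _ mA. Qed.

HB.instance Definition _ (R : realType) (d : nat)
    (leb : {measure set (Rd R d) -> \bar R}) :=
  Measure.copy (restr_cube leb) (mrestr leb (@measurable_cube R d)).

(* The image of [restr_cube leb] under a [G] that is only measurable on the
   cube; [mG] is carried so that the measure instance below is inferable. *)
Definition cube_pushforward (R : realType) (d : nat)
    (leb : {measure set (Rd R d) -> \bar R}) (G : Rd R d -> Rd R d)
    (mG : measurable_fun (cube R d) G) : set (Rd R d) -> \bar R :=
  pushforward (restr_cube leb) G.

Section cube_pushforward.
Context (R : realType) (d : nat) (leb : {measure set (Rd R d) -> \bar R}).
Context (G : Rd R d -> Rd R d) (mG : measurable_fun (cube R d) G).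
Local Open Scope ereal_scope.

Local Notation nu := (cube_pushforward leb mG).

Let mGcube := measurable_preimage_cube mG.

Let nu0 : nu set0 = 0.
Proof. by rewrite /cube_pushforward /pushforward preimage_set0 measure0. Qed.

Let nu_ge0 A : 0 <= nu A.
Proof. exact: (measure_ge0 (restr_cube leb)). Qed.

Let nu_sigma_additive : semi_sigma_additive nu.
Proof.
move=> F mF tF /mGcube; rewrite /cube_pushforward /pushforward /restr_cube.
rewrite preimage_bigcup setI_bigcupl => mU; apply: measure_semi_sigma_additive => //.
- by move=> n; exact: mGcube.
apply/trivIsetP => i j _ _ ij; rewrite setIACA setIid -preimage_setI.
move/trivIsetP : tF => /(_ i j I I ij) ->.
by apply/seteqP; split => // x [[]].
Qed.

HB.instance Definition _ := isMeasure.Build _ _ _ nu nu0 nu_ge0 nu_sigma_additive.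

End cube_pushforward.

Section gan_generator.
Context (R : realType) (d : nat) (leb : {measure set (Rd R d) -> \bar R}).
Context (mustar : probability (Rd R d) R) (pstar : Rd R d -> R).
Hypothesis mpstar : measurable_fun setT pstar.
Hypothesis pstar_gt0 : forall x, cube R d x -> 0 < pstar x.
Hypothesis pstar_out : forall x, ~ cube R d x -> pstar x = 0.
Hypothesis mustarE : forall A, measurable A ->
  mustar A = (\int[leb]_(x in A) (pstar x)%:E)%E.
Context (dO : measure_display) (Omega : measurableType dO) (P : probability Omega R).
Context (Y Z : nat -> Omega -> Rd R d).
Hypotheses (HY : iid_law P Y mustar) (HZ : iid_law P Z (restr_cube leb)).
Context (G : Rd R d -> Rd R d) (mG : measurable_fun (cube R d) G) (p : Rd R d -> R).
Hypotheses (mp : measurable_fun setT p) (p0 : forall x, 0 <= p x).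
Hypothesis pushE : forall A, measurable A ->
  pushforward (restr_cube leb) G A = (\int[leb]_(x in A) (p x)%:E)%E.
Local Open Scope ereal_scope.

Let pstar_ge0 x : (0 <= pstar x)%R.
Proof. by have [/pstar_gt0/ltW|/pstar_out ->] := pselect (cube R d x). Qed.

Let leb_cube : leb (cube R d) = 1.
Proof.
case: HZ => _ Zcube lawZ _.
transitivity (restr_cube leb (cube R d)); first by rewrite /restr_cube setIid.
rewrite -(lawZ 0%N); last exact: measurable_cube.
rewrite -(probability_setT P); congr (P _).
by apply/seteqP; split => // w _; exact: Zcube.
Qed.

Let preimage_GZ A : (G \o Z 0) @^-1` A = Z 0 @^-1` (G @^-1` A `&` cube R d).
Proof. by case: HZ => _ Zcube _ _; apply/seteqP; split => w /= => [GZw|[]//]. Qed.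

Let mGcube := measurable_preimage_cube mG.

Let mGZ : measurable_fun setT (G \o Z 0).
Proof.
case: HZ => mZ _ _ _ _ A mA; rewrite setTI preimage_GZ -[X in measurable X]setTI.
exact: mZ 0%N measurableT _ (mGcube mA).
Qed.

Let lawGZ A : measurable A ->
  P ((G \o Z 0) @^-1` A) = \int[leb]_(x in A) (p x)%:E.
Proof.
case: HZ => _ _ lawZ _ mA; rewrite preimage_GZ lawZ; last exact: mGcube.
by rewrite -pushE // /pushforward /restr_cube -setIA setIid.
Qed.

Let DG_E x : DG pstar p x = (pstar x / (pstar x + p x))%R.
Proof. by rewrite /DG; case: asboolP => // /pstar_out ->; rewrite mul0r. Qed.

Lemma Lpop_bin_xent (D : Rd R d -> R) :
    measurable_fun setT D -> (forall x, 0 <= D x <= 1)%R ->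
  Lpop P Y Z G D = - ((2^-1)%:E * \int[leb]_x bin_xent (pstar x) (p x) (D x)).
Proof.
move=> mD D01; case: HY => mY _ lawY _.
have mlogD : measurable_fun setT (fun x => - elog (D x)).
  by apply: measurableT_comp => //; exact: measurableT_comp (@measurable_elog R) mD.
have mlogDN : measurable_fun setT (fun x => - elog (1 - D x)).
  apply: measurableT_comp => //; apply: measurableT_comp (@measurable_elog R) _.
  by apply: measurable_funB => //; exact: measurable_cst.
have logD_ge0 x : 0 <= - elog (D x) by apply: oppe_elog_ge0; case/andP: (D01 x).
have logDN_ge0 x : 0 <= - elog (1 - D x).
  by apply: oppe_elog_ge0; rewrite lerBlDr lerDl; case/andP: (D01 x).
have intN (f : Omega -> \bar R) : (forall w, 0 <= - f w) ->
    \int[P]_w f w = - \int[P]_w - f w.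
  by move=> f0; rewrite -integral_ge0N //; apply: eq_integral => w _; rewrite oppeK.
rewrite /Lpop (intN (fun w => elog (D (Y 0 w)))) //.
rewrite (intN (fun w => elog (1 - D (G (Z 0 w))))) //.
have lawY0 A : measurable A -> P (Y 0 @^-1` A) = \int[leb]_(x in A) (pstar x)%:E.
  by move=> mA; rewrite lawY // mustarE.
rewrite (ge0_integral_law_density mpstar pstar_ge0 (mY 0%N) lawY0 mlogD logD_ge0).
rewrite (ge0_integral_law_density mp p0 mGZ lawGZ mlogDN logDN_ge0).
rewrite /bin_xent ge0_integralD //; last 4 first.
- by move=> x _; rewrite mule_ge0 ?lee_fin.
- by apply: emeasurable_funM => //; exact/measurable_EFinP.
- by move=> x _; rewrite mule_ge0 ?lee_fin.
- by apply: emeasurable_funM => //; exact/measurable_EFinP.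
rewrite -muleN; congr (_ * _); rewrite [RHS]oppeD //.
by apply: ge0_adde_def; rewrite inE;
  apply: integral_ge0 => x _; rewrite mule_ge0 ?lee_fin.
Qed.

Let DG_itv01 x : (0 <= DG pstar p x <= 1)%R.
Proof. by rewrite DG_E div_addr_itv01. Qed.

Let mDG : measurable_fun setT (DG pstar p).
Proof.
rewrite (funext DG_E); apply: measurable_funM => //.
by apply: measurableT_comp (@measurable_inv R) _; exact: measurable_funD.
Qed.

Lemma Lpop_le_DG (D : Rd R d -> R) :
    measurable_fun setT D -> (forall x, 0 <= D x <= 1)%R ->
  Lpop P Y Z G D <= Lpop P Y Z G (DG pstar p).
Proof.
move=> mD D01; rewrite !Lpop_bin_xent // leeN2 lee_wpmul2l ?lee_fin ?invr_ge0 //.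
apply: ge0_le_integral => //.
- by move=> x _; apply: bin_xent_ge0.
- exact: measurable_bin_xent.
- exact: measurable_bin_xent.
- by move=> x _; rewrite DG_E; apply: bin_xent_opt_le.
Qed.

Lemma dJS_Lpop_DG :
  dJS mustar (pushforward (restr_cube leb) G) = Lpop P Y Z G (DG pstar p) + (ln 2)%:E.
Proof.
have push1 : cube_pushforward leb mG setT = 1.
  by rewrite /cube_pushforward /pushforward preimage_setT /restr_cube setTI leb_cube.
rewrite (dJS_density (mu := cube_pushforward leb mG) mpstar mp pstar_ge0 p0 mustarE
  pushE (probability_setT _) push1).
rewrite Lpop_bin_xent // addeC; congr (- (_ * _) + _).
by apply: eq_integral => x _; rewrite DG_E.
Qed.

End gan_generator.

Unset Implicit Arguments.

Theorem proposition1 (R : realType) (d : nat)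
  (leb : {measure set (Rd R d) -> \bar R})
  (Hleb : is_lebesgue_measure leb)
  (mustar : probability (Rd R d) R) (pstar : Rd R d -> R)
  (Hpstar_meas : measurable_fun setT pstar)
  (Hpstar_pos : forall x, cube R d x -> 0 < pstar x)
  (Hpstar_out : forall x, ~ cube R d x -> pstar x = 0)
  (Hmustar : forall A, measurable A ->
      mustar A = (\int[leb]_(x in A) (pstar x)%:E)%E)
  (dO : measure_display) (Omega : measurableType dO) (P : probability Omega R)
  (Y Z : nat -> Omega -> Rd R d)
  (HY : iid_law P Y mustar)
  (HZ : iid_law P Z (restr_cube leb))
  (Hgen : set (Rd R d -> Rd R d)) (Hdis : set (Rd R d -> R))
  (Hgen_meas : forall G, Hgen G -> measurable_fun (cube R d) G)
  (Hgen_ac : forall G, Hgen G -> pushforward (restr_cube leb) G `<< leb)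
  (dens : (Rd R d -> Rd R d) -> Rd R d -> R)
  (Hdens : forall G, Hgen G ->
      [/\ measurable_fun setT (dens G), (forall x, 0 <= dens G x) &
          forall A, measurable A ->
            pushforward (restr_cube leb) G A = (\int[leb]_(x in A) (dens G x)%:E)%E])
  (Hdis_meas : forall D, Hdis D -> measurable_fun setT D)
  (Hdis_range : forall D, Hdis D -> forall x, 0 <= D x <= 1)
  (Ghat : nat -> Omega -> (Rd R d -> Rd R d))
  (HGhat : forall n w, Hgen (Ghat n w)) :
  let DeltaG : \bar R :=
    ereal_inf [set dJS mustar (pushforward (restr_cube leb) G) | G in Hgen] in
  let DeltaD : \bar R :=
    ereal_sup [set usub (Lpop P Y Z G (DG pstar (dens G)))
                        (ereal_sup [set Lpop P Y Z G D | D in Hdis]) | G in Hgen] in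
  let DeltaS (n : nat) (w : Omega) : \bar R :=
    ereal_sup [set `| usub (Lpop P Y Z G D) (Lemp Y Z n w G D) |%E
                | G in Hgen & D in Hdis] in
  let DeltaT (n : nat) (w : Omega) : \bar R :=
    usub (ereal_sup [set Lemp Y Z n w (Ghat n w) D | D in Hdis])
         (ereal_inf [set ereal_sup [set Lemp Y Z n w G D | D in Hdis] | G in Hgen]) in
  forall n : nat, (0 < n)%N ->
    {ae P, forall w,
      (dJS mustar (pushforward (restr_cube leb) (Ghat n w))
        <= uadd (uadd (uadd (DeltaT n w) DeltaD) (2%:E * DeltaS n w)) DeltaG)%E}.
Proof.
move=> DeltaG DeltaD DeltaS DeltaT n _; apply: aeW => w.
rewrite /DeltaT /DeltaD /DeltaS /DeltaG.
apply: (@gan_error_decomposition R _ _ Hgen Hdis (Lpop P Y Z) (Lemp Y Z n w)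
  (fun G => Lpop P Y Z G (DG pstar (dens G)))
  (fun G => dJS mustar (pushforward (restr_cube leb) G)) (ln 2) _ (HGhat n w))
  => [G genG|G D genG disD]; have [mp p0 pushE] := Hdens G genG.
- exact (dJS_Lpop_DG Hpstar_meas Hpstar_pos Hpstar_out Hmustar HY HZ
    (Hgen_meas G genG) mp p0 pushE).
- exact (Lpop_le_DG Hpstar_meas Hpstar_pos Hpstar_out Hmustar HY HZ
    (Hgen_meas G genG) mp p0 pushE (Hdis_meas D disD) (Hdis_range D disD)).
Qed.
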